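(* Let $(X,\tau)$ be a kd-space and let $A\subseteq X$ be locally dense, i.e. $A\subseteq \mathrm{Int}(\mathrm{Cl}(A))$. Then the subspace $(A,\tau|A)$ is a kd-space.
   Context: A space is a kd-space if every compact subset is $\delta$-closed. In a space $Y$, a set $U$ is regular open if $U=\mathrm{Int}(\mathrm{Cl}(U))$; a point $x$ is a $\delta$-cluster point of $B\subseteq Y$ if $B\cap U\neq\emptyset$ for every regular open $U\ni x$; $B$ is $\delta$-closed if it contains all its $\delta$-cluster points. *)

From HB Require Import structures.
From mathcomp Require Import all_boot all_order all_algebra.
From mathcomp Require Import all_classical all_reals all_analysis.
Set Implicit Arguments.
Unset Strict Implicit.
Unset Printing Implicit Defensive.
Local Open Scope classical_set_scope.

Definition regular_open {Y : topologicalType} (U : set Y) : Prop :=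
  U = interior (closure U).

Definition delta_cluster {Y : topologicalType} (B : set Y) (x : Y) : Prop :=
  forall U : set Y, regular_open U -> U x -> B `&` U !=set0.

Definition delta_closed {Y : topologicalType} (B : set Y) : Prop :=
  forall x : Y, delta_cluster B x -> B x.

Definition kd_space (Y : topologicalType) : Prop :=
  forall K : set Y, compact K -> delta_closed K.

Definition subspace_of {X : topologicalType} (A : set X) : topologicalType :=
  initial_topology (@sval X (fun x => x \in A)).

(* The trace on A of a regular open set U of X is regular open in A: if a
   point of A lies in the A-interior of the A-closure of U ∩ A, witnessed by
   an open W of X, then W ∩ Int(Cl A) is an open neighbourhood of it in X
   contained in Cl U, by local density. Hence a δ-cluster point in A of a
   compact K ⊆ A is a δ-cluster point in X of K, which is compact in X, so it
   lies in K. *)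
From HB Require Import structures.
From mathcomp Require Import all_boot all_order all_algebra.
From mathcomp Require Import all_classical all_reals all_analysis.
Set Implicit Arguments.
Unset Strict Implicit.
Unset Printing Implicit Defensive.
Local Open Scope classical_set_scope.

Lemma open_closureI {T : topologicalType} (O B : set T) :
  open O -> O `&` closure B `<=` closure (O `&` B).
Proof.
move=> oO y [Oy clBy] N yN.
have /clBy [z [Bz [Oz Nz]]] : nbhs y (O `&` N).
  by apply: filterI => //; exact: open_nbhs_nbhs.
by exists z.
Qed.

Lemma image_closure {S T : topologicalType} (f : S -> T) (B : set S) :
  continuous f -> f @` closure B `<=` closure (f @` B).
Proof.
move=> cf _ [x clBx <-] N /cf /clBx [z [Bz Nz]].
by exists (f z); split => //; exists z.
Qed.

Lemma regular_open_preimage_val (X : topologicalType) (A : set X) :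
  A `<=` interior (closure A) -> forall U : set X, regular_open U ->
  regular_open (val @^-1` U : set (subspace_of A)).
Proof.
move=> Aloc U rU.
have oU : open U by rewrite rU; exact: open_interior.
have cval : continuous (val : subspace_of A -> X) := @initial_continuous _ _ _.
apply/seteqP; split => [|x].
  have oV : open (val @^-1` U : set (subspace_of A)) by exists U.
  by rewrite -open_subsetE //; exact: subset_closure.
rewrite /interior nbhsE => -[_ [] [W oW <-] Wx WclV].
have WAclU : W `&` A `<=` closure U.
  move=> z [Wz Az]; pose zA : subspace_of A := exist _ z (mem_set Az).
  have zclV : (val @` closure (val @^-1` U : set (subspace_of A))) z.
    by exists zA => //; exact: WclV.
  by move: (image_closure cval zclV); apply: closureS; exact: image_preimage_subset.
pose G := W `&` interior (closure A).
have oG : open G by apply: openI => //; exact: open_interior.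
have Gx : G (val x) by split => //; apply: Aloc; exact: set_mem (valP x).
have GclU : G `<=` closure U.
  move=> y [Wy /interior_subset clAy].
  rewrite [closure U](closure_id _).1; last exact: closed_closure.
  exact: closureS WAclU _ (open_closureI oW (conj Wy clAy)).
have : interior (closure U) (val x).
  by move: GclU; rewrite open_subsetE // => /(_ _ Gx).
by rewrite -rU.
Qed.

Lemma delta_cluster_image {S T : topologicalType} (f : S -> T) (B : set S) x :
  (forall U, regular_open U -> regular_open (f @^-1` U)) ->
  delta_cluster B x -> delta_cluster (f @` B) (f x).
Proof.
move=> rf Bx U rU Ufx; have [z [Bz Ufz]] := Bx _ (rf _ rU) Ufx.
by exists (f z); split => //; exists z.
Qed.

Theorem mainTheorem5 (X : topologicalType) (A : set X) :
  kd_space X -> A `<=` interior (closure A) -> kd_space (subspace_of A).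
Proof.
move=> kdX Aloc K cK a Ka.
have cvalK : compact (val @` K).
  apply: continuous_compact => //.
  exact/continuous_subspaceT/initial_continuous.
have := delta_cluster_image (regular_open_preimage_val Aloc) Ka.
move=> /(kdX _ cvalK) [b Kb bEa].
have <- : b = a by exact: val_inj bEa.
exact: Kb.
Qed.
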